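(* Let $\hat G$ be a multigraph, let $f\in E(\hat G)$ be an edge with endpoints $u,v$, and let $G=\hat G\setminus f$ be the graph on the same node set with $f$ removed. Identify $\mathcal C_G$ with $\mathcal C_{\hat G}\cap\{x: x_f=0\}$. Let $\psi$ be a height function inducing a good triangulation $\mathcal T_{\hat G}$ of $\mathcal C_{\hat G}$, and let $\mathcal T_G$ be the triangulation of $\mathcal C_G$ induced by the restriction of $\psi$ to the lattice points of $\mathcal C_G$. Then for a set $S$ of lattice points of $\mathcal C_G$ the following are equivalent: (1) $S$ is a simplex of $\mathcal T_G$; (2) $S\cup\{\widetilde e_f\}$ is a simplex of $\mathcal T_{\hat G}$; (3) at least one of $S\cup\{e_f\}$, $S\cup\{\overrightarrow e_f\}$, $S\cup\{\overleftarrow e_f\}$ is a simplex of $\mathcal T_{\hat G}$.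
   Context: For a finite undirected multigraph $G=(V,E)$ (loops, parallel edges and isolated nodes allowed) with $n=|V|$, $m=|E|$, work in $\mathbb{R}^V\times\mathbb{R}^E\cong\mathbb{R}^{n+m}$ with standard basis vectors $e_u$ ($u\in V$), $e_f$ ($f\in E$). Fix for each edge $f$ an ordering $(u,v)$ of its endpoints ($u=v$ for a loop) and set $\widetilde e_f=e_u+e_v-e_f$, $\overleftarrow e_f=e_u-e_v+e_f$, $\overrightarrow e_f=-e_u+e_v+e_f$ (so for a loop $\overleftarrow e_f=\overrightarrow e_f=e_f$). The cosmological polytope $\mathcal C_G$ is the convex hull of $\{e_f,\widetilde e_f,\overleftarrow e_f,\overrightarrow e_f: f\in E\}\cup\{e_u: u\in V\}$; these are exactly its lattice points, and it is an $(n+m-1)$-dimensional polytope in the hyperplane $\sum_i x_i=1$. A good triangulation of $\mathcal C_G$ is a regular triangulation (induced by a height function $\psi$ on the lattice points of $\mathcal C_G$) whose vertex set is the set of all lattice points of $\mathcal C_G$ and which contains the standard simplex $\mathrm{conv}\{e_u,e_f: u\in V, f\in E\}$ as a maximal cell; simplices of a triangulation are identified with their vertex sets. *)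

From HB Require Import structures.
From mathcomp Require Import all_boot all_order all_algebra.
From mathcomp Require Import finmap.
Set Implicit Arguments. Unset Strict Implicit. Unset Printing Implicit Defensive.
Import Order.TTheory GRing.Theory Num.Theory.
Local Open Scope ring_scope.


Notation point R V E := {ffun (V + E)%type -> R}.

Section Cosmological.
Variables (R : realFieldType) (V E : finType).

Local Notation pt := (point R V E).

Definition eV (u : V) : pt := [ffun i => if i == inl u then 1 else 0].
Definition eE (g : E) : pt := [ffun i => if i == inr g then 1 else 0].

(* A multigraph on V with edge set E: each edge g has a fixed ordering
   (ends g).1, (ends g).2 of its endpoints (equal for a loop). *)
Variable ends : E -> V * V.

Definition etilde (g : E) : pt := eV (ends g).1 + eV (ends g).2 - eE g.
Definition eleft  (g : E) : pt := eV (ends g).1 - eV (ends g).2 + eE g.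
Definition eright (g : E) : pt := - eV (ends g).1 + eV (ends g).2 + eE g.

(* Lattice points of the cosmological polytope of the subgraph with all
   nodes of V and edge set D (as a subset of E), embedded in R^V x R^E
   (coordinates of edges outside D are 0). *)
Definition latt (D : pred E) : pred pt := fun x =>
  [exists u : V, x == eV u] ||
  [exists g in D, [|| x == eE g, x == etilde g, x == eleft g | x == eright g]].

(* Cells of the regular subdivision of the point configuration A induced
   by the height function psi: S is the set of points of A lying on a
   lower face of the lifted configuration, i.e. there is an affine
   function h(x) = <c,x> + c0 with h <= psi on A, and h = psi exactly on S. *)
Definition rcell (A : pred pt) (psi : pt -> R) (S : {fset pt}) : Prop :=
  {subset S <= A} /\
  exists (c : pt) (c0 : R), forall x, A x ->
    (\sum_i c i * x i + c0 <= psi x) /\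
    ((\sum_i c i * x i + c0 == psi x) = (x \in S)).

Definition aff_indep (S : {fset pt}) : Prop :=
  forall lam : pt -> R,
    \sum_(x <- S) lam x = 0 -> (forall i, \sum_(x <- S) lam x * x i = 0) ->
    forall x, x \in S -> lam x = 0.

Definition std_simplex : {fset pt} :=
  ([fset eV u | u in enum V] `|` [fset eE g | g in enum E])%fset.

(* psi induces a good triangulation of the cosmological polytope of the
   whole graph (V, E, ends). *)
Definition good_height (psi : pt -> R) : Prop :=
  [/\ (* the regular subdivision is a triangulation *)
      (forall S, rcell (latt predT) psi S -> aff_indep S),
      (* its vertex set is the set of all lattice points *)
      (forall x, latt predT x -> exists S, rcell (latt predT) psi S /\ x \in S),
      rcell (latt predT) psi std_simplex &
      (forall S, rcell (latt predT) psi S -> (std_simplex `<=` S)%fset -> S = std_simplex)].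

End Cosmological.

(* Sort the lattice points of the cosmological polytope of the whole graph by their
   [f]-coordinate: the points of the deletion have [x_f = 0], [etilde f] has [x_f = -1], and
   [e_f], [eleft f], [eright f] have [x_f = 1].  Adding a multiple of [x_f] to a supporting
   affine function (a tilt along [e_f]) leaves it unchanged on the deletion and moves it in
   opposite directions on the two other groups.  The key inequality is that for each point [y]
   with [y_f = 1], [etilde f + y] is a sum of two vertices [p + q] of the deletion
   ([e_u + e_v], [2 e_u], [2 e_v]) with [psi p + psi q < psi (etilde f) + psi y]: for [e_f]
   because the standard simplex is a cell, for the other two because the cells through [e_u]
   and [e_v] are simplices.  Hence a lower face of the deletion can be tilted up until it meets
   [etilde f] while staying strictly below every [y]; conversely a cell through [etilde f] can
   be tilted down until it meets the nearest [y], passing to a face if several are met at once,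
   and faces of cells of a triangulation are cells. *)

From HB Require Import structures.
From mathcomp Require Import all_boot all_order all_algebra finmap.
From mathcomp Require Import ring lra.
Set Implicit Arguments. Unset Strict Implicit. Unset Printing Implicit Defensive.
Import Order.TTheory GRing.Theory Num.Theory.
Local Open Scope ring_scope.

Section RegularSubdivision.
Variables (R : realFieldType) (V E : finType).
Local Notation pt := (point R V E).

Definition dotp (c x : pt) : R := \sum_i c i * x i.

Lemma dotpDr (c x y : pt) : dotp c (x + y) = dotp c x + dotp c y.
Proof. by rewrite -big_split; apply: eq_bigr => i _; rewrite ffunE mulrDr. Qed.

Lemma dotp_shift (c d x : pt) (e : R) :
  dotp [ffun i => c i + e * d i] x = dotp c x + e * dotp d x.
Proof. by rewrite mulr_sumr -big_split; apply: eq_bigr => i _; rewrite ffunE mulrDl mulrA. Qed.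

Lemma dotp_eEl (g : E) (x : pt) : dotp (eE R V g) x = x (inr g).
Proof.
rewrite /dotp (bigD1 (inr g)) //= big1 => [|i /negbTE ig]; last by rewrite ffunE ig mul0r.
by rewrite ffunE eqxx mul1r addr0.
Qed.

Definition gap (psi : pt -> R) (c : pt) (c0 : R) (x : pt) : R := psi x - (dotp c x + c0).

Lemma rcellP (A : pred pt) psi S : rcell A psi S <->
  {subset S <= A} /\ exists c c0, forall x, A x ->
    0 <= gap psi c c0 x /\ (gap psi c c0 x == 0) = (x \in S).
Proof.
have gapE c c0 x : ((0 <= gap psi c c0 x) = (dotp c x + c0 <= psi x)) *
                   ((gap psi c c0 x == 0) = (dotp c x + c0 == psi x)).
  by rewrite subr_ge0 subr_eq0 eq_sym.
by split=> -[SA [c [c0 Hc]]]; split=> //; exists c, c0 => x /Hc; rewrite !gapE.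
Qed.

Lemma gap_shift (psi : pt -> R) (c d x : pt) (c0 d0 e : R) :
  gap psi [ffun i => c i + e * d i] (c0 + e * d0) x = gap psi c c0 x - e * (dotp d x + d0).
Proof. by rewrite /gap dotp_shift; ring. Qed.

Lemma gap_add (psi : pt -> R) (c : pt) (c0 : R) (a b p q : pt) : a + b = p + q ->
  gap psi c c0 a + gap psi c c0 b =
  gap psi c c0 p + gap psi c c0 q + (psi a + psi b - (psi p + psi q)).
Proof.
move=> abpq; have : dotp c a + dotp c b = dotp c p + dotp c q by rewrite -!dotpDr abpq.
by rewrite /gap; lra.
Qed.

Lemma sum_delta_seq (T : eqType) (s : seq T) (a : T) (F : T -> R) :
  uniq s -> a \in s -> \sum_(x <- s) (a == x)%:R * F x = F a.
Proof.
move=> s_uniq a_s; rewrite (big_rem a) //= eqxx mul1r big_seq big1 ?addr0 // => x.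
by case: eqP => [<-|_ _]; rewrite ?mem_rem_uniqF ?mul0r.
Qed.

Lemma aff_indep_midpoint (C : {fset pt}) (a b m : pt) :
  aff_indep C -> a \in C -> b \in C -> m \in C -> a != b -> a + b = m + m -> False.
Proof.
move=> indC aC bC mC ab abm.
have ma : m != a by apply: contraNneq ab => ma; move: abm; rewrite ma => /addrI ->.
pose lam x : R := (a == x)%:R + (b == x)%:R - (m == x)%:R *+ 2.
have lamE (F : pt -> R) : \sum_(x <- C) lam x * F x = F a + F b - F m *+ 2.
  under eq_bigr do rewrite mulrBl mulrDl mulrnAl.
  by rewrite sumrB !big_split /= !sum_delta_seq ?fset_uniq // mulr2n.
suff /eqP : lam a = 0.
  by rewrite /lam eqxx (eq_sym b) (negbTE ab) (negbTE ma) addr0 mul0rn subr0 oner_eq0.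
apply: indC aC.
- under eq_bigr do rewrite -[lam _]mulr1.
  by rewrite (lamE (fun=> 1)) mulr2n subrr.
- move=> i; have := congr1 (fun y : pt => y i) abm; rewrite lamE !ffunE => ->.
  by rewrite mulr2n subrr.
Qed.

Local Notation N := #|{: (V + E)%type}|.+1.

Definition homog (x : pt) : 'rV[R]_N :=
  \row_j if unlift ord0 j is Some i then x (enum_val i) else 1.

Lemma homog0 (x : pt) : homog x 0 ord0 = 1.
Proof. by rewrite mxE unlift_none. Qed.

Lemma homog_lift (x : pt) (i : V + E) : homog x 0 (lift ord0 (enum_rank i)) = x i.
Proof. by rewrite mxE liftK enum_rankK. Qed.

Lemma homog_mul (x : pt) (w : 'cV[R]_N) :
  (homog x *m w) 0 0 = dotp [ffun i => w (lift ord0 (enum_rank i)) 0] x + w ord0 0.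
Proof.
rewrite mxE big_ord_recl homog0 mul1r addrC; congr (_ + _).
rewrite /dotp [RHS](big_enum_val (A := predT)) /=; apply: eq_bigr => i _.
by rewrite ffunE enum_valK mxE liftK mulrC.
Qed.

(* A linear dependence among the homogenizations [(1, x)] is an affine dependence. *)
Lemma aff_indep_homog_notin (P : {fset pt}) (b : pt) :
  b \notin P -> aff_indep (b |` P)%fset ->
  ~~ (homog b <= \matrix_(i < size P) homog P`_i)%MS.
Proof.
move=> bP indP; apply/negP => /submxP [u bu].
have bE j : homog b 0 j = \sum_i u 0 i * homog P`_i 0 j.
  by rewrite bu mxE; apply: eq_bigr => i _; rewrite !mxE.
pose lam x : R := \sum_(i < size P) (P`_i == x)%:R * u 0 i - (b == x)%:R.
have lamE (F : pt -> R) :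
    \sum_(x <- (b |` P)%fset) lam x * F x = \sum_(i < size P) u 0 i * F P`_i - F b.
  under eq_bigr do rewrite mulrBl mulr_suml.
  rewrite sumrB exchange_big sum_delta_seq ?fset_uniq ?fset1U1 //=; congr (_ - _).
  apply: eq_bigr => i _; under eq_bigr do rewrite mulrAC.
  by rewrite -mulr_suml sum_delta_seq ?fset_uniq ?fset1Ur ?mem_nth // mulrC.
suff /eqP : lam b = 0.
  rewrite /lam eqxx big1 ?sub0r ?oppr_eq0 ?oner_eq0 // => i _.
  by case: eqP => [Pib|_]; [move: bP; rewrite -Pib mem_nth | rewrite mul0r].
apply: indP (fset1U1 _ _).
- under eq_bigr do rewrite -[lam _]mulr1.
  rewrite lamE (eq_bigr (fun i => u 0 i * homog P`_i 0 ord0)) => [|i _]; last by rewrite homog0.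
  by rewrite -bE homog0 subrr.
- move=> k; pose j := lift ord0 (enum_rank k).
  rewrite lamE (eq_bigr (fun i => u 0 i * homog P`_i 0 j)) => [|i _]; last by rewrite homog_lift.
  by rewrite -bE homog_lift subrr.
Qed.

Lemma aff_indep_separate (P : {fset pt}) (b : pt) :
  b \notin P -> aff_indep (b |` P)%fset ->
  exists c c0, (forall x, x \in P -> dotp c x + c0 = 0) /\ dotp c b + c0 = -1.
Proof.
move=> bP /(aff_indep_homog_notin bP); set M := \matrix_(i < size P) _; rewrite submxE => bK.
have /existsP [j bKj] : [exists j, (homog b *m cokermx M) 0 j != 0].
  move: bK; apply: contraR => /existsPn bK0.
  by apply/eqP/rowP => j; rewrite [RHS]mxE; apply/eqP; move: (bK0 j); rewrite negbK.
(* The [j]-th column of the cokernel of [M] kills every [homog x] with [x \in P], but not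
   [homog b]; rescaled, it is the separating affine functional. *)
set a := (homog b *m cokermx M) 0 j in bKj.
pose w := (- a^-1) *: col j (cokermx M).
have homog_w x : (homog x *m w) 0 0 = - a^-1 * (homog x *m cokermx M) 0 j.
  by rewrite -scalemxAr !mxE; under eq_bigr do rewrite [col _ _ _ _]mxE.
exists [ffun i => w (lift ord0 (enum_rank i)) 0], (w ord0 0).
split=> [x xP|]; rewrite -homog_mul homog_w; last by rewrite mulNr mulVf.
have ix : (index x P < size P)%N by rewrite index_mem.
have -> : homog x = row (Ordinal ix) M by rewrite rowK /= nth_index.
by rewrite -row_mul mulmx_coker !mxE mulr0.
Qed.

Lemma exists_small_pos (T : eqType) (s : seq T) (l m : T -> R) :
  (forall x, x \in s -> 0 < m x) -> exists2 e, 0 < e & forall x, x \in s -> e * l x < m x.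
Proof.
have scale_down (e e' : R) x : 0 < e -> e <= e' -> 0 < m x -> e' * l x < m x -> e * l x < m x.
  by move=> *; nra.
elim: s => [|y s IH] m_gt0; first by exists 1.
have [e e_gt0 He] := IH (fun x xs => m_gt0 x (mem_behead (s := y :: s) xs)).
have my : 0 < m y := m_gt0 y (mem_head y s).
pose d := m y / (`|l y| + 1).
have d_gt0 : 0 < d by rewrite divr_gt0 ?ltr_wpDl.
have dly : d * l y < m y.
  rewrite -[m y](@divfK _ (`|l y| + 1)) ?gt_eqF ?ltr_wpDl // -/d.
  by rewrite (le_lt_trans (ler_wpM2l (ltW d_gt0) (ler_norm _))) // ltr_pM2l // ltrDl.
exists (Num.min e d) => [|x]; first by rewrite lt_min e_gt0 d_gt0.
rewrite in_cons => /predU1P [-> | xs].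
  by apply: (scale_down _ d); rewrite ?lt_min ?e_gt0 ?ge_min ?lexx ?orbT.
by apply: (scale_down _ e); rewrite ?lt_min ?e_gt0 ?ge_min ?lexx ?m_gt0 ?He ?in_cons ?xs ?orbT.
Qed.

Lemma seq_argmin (T : eqType) (s : seq T) (F : T -> R) :
  s != [::] -> exists2 y, y \in s & forall x, x \in s -> F y <= F x.
Proof.
elim: s => // y s IH _; have [-> | /IH [z zs zmin]] := eqVneq s [::].
  by exists y => [|x]; rewrite ?mem_head // inE => /eqP ->.
have [Fyz | Fzy] := leP (F y) (F z).
  exists y => [|x]; first exact: mem_head.
  by rewrite in_cons => /predU1P [-> // | /zmin]; apply: le_trans.
exists z => [|x]; first by rewrite in_cons zs orbT.
by rewrite in_cons => /predU1P [-> | /zmin //]; apply: ltW.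
Qed.

Lemma rcell_fsetD1 (A : pred pt) (L : seq pt) psi (C : {fset pt}) (b : pt) :
  (forall x, A x -> x \in L) -> rcell A psi C -> aff_indep C -> b \in C ->
  rcell A psi (C `\ b)%fset.
Proof.
move=> AL /rcellP [CA [c [c0 Hc]]] indC bC.
have bD : b \notin (C `\ b)%fset by rewrite fsetD11.
have indD : aff_indep (b |` (C `\ b))%fset by rewrite fsetD1K.
have [d [d0 [dD db]]] := aff_indep_separate bD indD.
pose s := [seq x <- L | A x && (x \notin C)].
have gap_gt0 x : x \in s -> 0 < gap psi c c0 x.
  rewrite mem_filter => /andP [/andP [Ax xC] _]; have [ge0 eq0] := Hc x Ax.
  by rewrite lt_def ge0 andbT eq0.
have [e e_gt0 He] := exists_small_pos (fun x => dotp d x + d0) gap_gt0.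
apply/rcellP; split=> [x /fsetD1P [_ /CA] //|].
exists [ffun i => c i + e * d i], (c0 + e * d0) => x Ax; rewrite gap_shift.
have [ge0 eq0] := Hc x Ax.
have [xb | xb] := eqVneq x b.
  subst x; have /eqP -> : gap psi c c0 b == 0 by rewrite eq0.
  by rewrite db (negbTE bD) mulrN1 sub0r opprK ltW ?gt_eqF.
have [xC | xC] := boolP (x \in C).
  by rewrite dD ?in_fsetD1 ?xb // mulr0 subr0 eq0.
have : 0 < gap psi c c0 x - e * (dotp d x + d0).
  by rewrite subr_gt0 He // mem_filter Ax xC AL.
by rewrite in_fsetD1 (negbTE xC) andbF => pos; rewrite ltW ?gt_eqF.
Qed.

Lemma rcell_fsubset (A : pred pt) (L : seq pt) psi (C T : {fset pt}) :
  (forall x, A x -> x \in L) -> (forall D, rcell A psi D -> aff_indep D) ->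
  rcell A psi C -> (T `<=` C)%fset -> rcell A psi T.
Proof.
move=> AL indA; have [n] := ubnP #|` C|; elim: n C => // n IH C ltCn cellC TC.
have [CT | /fsubsetPn [b bC bT]] := boolP (C `<=` T)%fset.
  by have -> : T = C by apply/eqP; rewrite eqEfsubset TC CT.
apply: (IH (C `\ b)%fset); first by move: ltCn; rewrite (cardfsD1 b) bC.
  exact: rcell_fsetD1 AL cellC (indA _ cellC) bC.
apply/fsubsetP => x xT; rewrite in_fsetD1 (fsubsetP TC) // andbT.
by apply: contraNneq bT => <-.
Qed.

Lemma rcell_midpoint_lt (A : pred pt) psi (C : {fset pt}) (a b m : pt) :
  rcell A psi C -> aff_indep C -> m \in C -> A a -> A b -> a != b -> a + b = m + m ->
  psi m + psi m < psi a + psi b.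
Proof.
move=> /rcellP [CA [c [c0 Hc]]] indC mC Aa Ab ab abm; rewrite ltNge; apply/negP => le.
have [ga0 ga] := Hc a Aa; have [gb0 gb] := Hc b Ab; have [_ gm] := Hc m (CA m mC).
have /eqP gm0 : gap psi c c0 m == 0 by rewrite gm.
have := gap_add psi c c0 abm; rewrite gm0 => gab.
have aC : a \in C by rewrite -ga; apply/eqP; lra.
have bC : b \in C by rewrite -gb; apply/eqP; lra.
exact: aff_indep_midpoint indC aC bC mC ab abm.
Qed.

End RegularSubdivision.

Section Deletion.
Variables (R : realFieldType) (V E : finType) (ends : E -> V * V) (f : E).
Local Notation pt := (point R V E).
Local Notation ef := (eE R V f).
Local Notation et := (etilde R ends f).
Local Notation el := (eleft R ends f).
Local Notation er := (eright R ends f).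
Local Notation eu := (eV R E (ends f).1).
Local Notation ev := (eV R E (ends f).2).
Local Notation fpos := [:: ef; el; er].

Definition latt_seq : seq pt := [seq eV R E u | u <- enum V] ++
  flatten [seq [:: eE R V g; etilde R ends g; eleft R ends g; eright R ends g] | g <- enum E].

Lemma latt_seqP (D : pred E) (x : pt) : latt ends D x -> x \in latt_seq.
Proof.
rewrite mem_cat => /orP [/existsP [u /eqP ->] | /existsP [g /andP [_ xg]]].
  by rewrite map_f ?mem_enum.
by apply/orP; right; apply/flatten_mapP; exists g; rewrite ?mem_enum ?inE.
Qed.

Lemma latt_predT (D : pred E) (x : pt) : latt ends D x -> latt ends predT x.
Proof.
case/orP => [xV | /existsP [g /andP [_ xg]]]; apply/orP; [by left | right].
by apply/existsP; exists g.
Qed.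

Lemma latt_eV (w : V) : latt ends (predC1 f) (eV R E w).
Proof. by apply/orP; left; apply/existsP; exists w. Qed.

Lemma latt_etilde : latt ends predT et.
Proof. by apply/orP; right; apply/existsP; exists f; rewrite !eqxx orbT. Qed.

Lemma latt_fpos (y : pt) : y \in fpos -> latt ends predT y.
Proof.
by rewrite !inE => /or3P [] /eqP ->; apply/orP; right; apply/existsP; exists f; rewrite !eqxx ?orbT.
Qed.

Lemma inr_eqE (g h : E) : (inr g == inr h :> V + E) = (g == h).
Proof. by []. Qed.

Lemma etilde_f : et (inr f) = -1.
Proof. by rewrite !ffunE /= eqxx; ring. Qed.

Lemma fpos_f (y : pt) : y \in fpos -> y (inr f) = 1.
Proof. by rewrite !inE => /or3P [] /eqP ->; rewrite !ffunE /= eqxx; ring. Qed.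

Lemma latt_del_f (x : pt) : latt ends (predC1 f) x -> x (inr f) = 0.
Proof.
case/orP => [/existsP [w /eqP ->] | /existsP [g /andP [gf xg]]]; first by rewrite ffunE.
rewrite inE /= in gf.
by case/or4P: xg => /eqP ->; rewrite !ffunE /= inr_eqE eq_sym (negbTE gf); ring.
Qed.

Lemma latt_predTP (x : pt) :
  latt ends predT x -> [\/ latt ends (predC1 f) x, x = et | x \in fpos].
Proof.
case/orP => [xV | /existsP [g /andP [_ xg]]]; first by constructor 1; apply/orP; left.
have [gf | gf] := eqVneq g f.
  subst g; case/or4P: xg => /eqP ->;
    [constructor 3 | constructor 2 | constructor 3 | constructor 3]; by rewrite ?inE ?eqxx ?orbT.
by constructor 1; apply/orP; right; apply/existsP; exists g; rewrite inE /= gf.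
Qed.

Lemma etilde_add_eE : et + ef = eu + ev.
Proof. by apply/ffunP => i; rewrite !ffunE; ring. Qed.

Lemma etilde_add_eleft : et + el = eu + eu.
Proof. by apply/ffunP => i; rewrite !ffunE; ring. Qed.

Lemma etilde_add_eright : et + er = ev + ev.
Proof. by apply/ffunP => i; rewrite !ffunE; ring. Qed.

Lemma neq_f_coord (x y : pt) : x (inr f) != y (inr f) -> x != y.
Proof. by apply: contraNneq => ->. Qed.

Lemma latt_del_neq_etilde (x : pt) : latt ends (predC1 f) x -> x != et.
Proof.
by move=> xD; apply: neq_f_coord; rewrite latt_del_f // etilde_f eq_sym oppr_eq0 oner_eq0.
Qed.

Lemma latt_del_notin_fpos (x : pt) : latt ends (predC1 f) x -> x \notin fpos.
Proof.
by move=> xD; apply/negP => /fpos_f; rewrite latt_del_f //; apply/eqP; rewrite eq_sym oner_eq0.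
Qed.

Lemma fpos_neq_etilde (y : pt) : y \in fpos -> y != et.
Proof. by move=> yf; apply: neq_f_coord; rewrite fpos_f // etilde_f; apply/eqP; lra. Qed.

Lemma etilde_notin_fpos : et \notin fpos.
Proof. by apply/negP => /fpos_neq_etilde; rewrite eqxx. Qed.

Section GoodHeight.
Variable psi : pt -> R.

Lemma rcell_tilt (T : {fset pt}) (c : pt) (c0 t : R) :
  {subset T <= latt ends predT} ->
  (forall x, latt ends (predC1 f) x ->
     0 <= gap psi c c0 x /\ (gap psi c c0 x == 0) = (x \in T)) ->
  0 <= gap psi c c0 et + t -> (gap psi c c0 et + t == 0) = (et \in T) ->
  (forall y, y \in fpos ->
     0 <= gap psi c c0 y - t /\ (gap psi c c0 y - t == 0) = (y \in T)) ->
  rcell (latt ends predT) psi T.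
Proof.
move=> TA del_ok et_ge0 et_eq0 fpos_ok; apply/rcellP; split=> //.
exists [ffun i => c i + t * eE R V f i], (c0 + t * 0) => x /latt_predTP [xD | -> | xf];
  rewrite gap_shift dotp_eEl addr0.
- by rewrite latt_del_f // mulr0 subr0; apply: del_ok.
- by rewrite etilde_f mulrN1 opprK.
- by rewrite fpos_f // mulr1; apply: fpos_ok.
Qed.

Hypothesis psi_good : good_height ends psi.

Lemma eV_add_lt_etilde_add_eE : psi eu + psi ev < psi et + psi ef.
Proof.
have [_ _ /rcellP [_ [c [c0 Hc]]] _] := psi_good.
have std_f x : x \in std_simplex R V E -> 0 <= x (inr f).
  by case/fsetUP => /imfsetP [g _ ->]; rewrite ffunE //=; case: ifP => _; rewrite ?ler01.
have std_eV w : eV R E w \in std_simplex R V E.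
  by apply/fsetUP; left; apply/imfsetP; exists w; rewrite ?mem_enum.
have std_ef : ef \in std_simplex R V E.
  by apply/fsetUP; right; apply/imfsetP; exists f; rewrite ?mem_enum.
have gap_std x : latt ends predT x -> x \in std_simplex R V E -> gap psi c c0 x = 0.
  by move=> Lx xS; apply/eqP; rewrite (Hc x Lx).2.
have [et_ge0 et_eq0] := Hc et latt_etilde.
have et_gt0 : 0 < gap psi c c0 et.
  rewrite lt_def et_ge0 andbT et_eq0; apply/negP => /std_f; rewrite etilde_f; lra.
have ef_L : latt ends predT ef by rewrite latt_fpos ?inE ?eqxx.
have := gap_add psi c c0 etilde_add_eE.
by rewrite !(gap_std _ (latt_predT (latt_eV _)) (std_eV _)) (gap_std _ ef_L std_ef); lra.
Qed.

Lemma eV_midpoint_lt (a b : pt) (w : V) :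
  latt ends predT a -> latt ends predT b -> a != b -> a + b = eV R E w + eV R E w ->
  psi (eV R E w) + psi (eV R E w) < psi a + psi b.
Proof.
case: psi_good => indep vert _ _ La Lb ab abw.
have [C [cellC wC]] := vert _ (latt_predT (latt_eV w)).
exact: rcell_midpoint_lt cellC (indep _ cellC) wC La Lb ab abw.
Qed.

Lemma etilde_add_fpos (y : pt) : y \in fpos -> exists p q,
  [/\ latt ends (predC1 f) p, latt ends (predC1 f) q, et + y = p + q &
       psi p + psi q < psi et + psi y].
Proof.
have et_neq y' : y' \in fpos -> et != y' by move=> y'f; rewrite eq_sym fpos_neq_etilde.
rewrite !inE => /or3P [] /eqP ->.
- by exists eu, ev; split; rewrite ?latt_eV ?etilde_add_eE ?eV_add_lt_etilde_add_eE.
- exists eu, eu; split; rewrite ?latt_eV ?etilde_add_eleft //.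
  apply: eV_midpoint_lt etilde_add_eleft;
    by rewrite ?latt_etilde ?latt_fpos ?et_neq ?inE ?eqxx ?orbT.
- exists ev, ev; split; rewrite ?latt_eV ?etilde_add_eright //.
  apply: eV_midpoint_lt etilde_add_eright;
    by rewrite ?latt_etilde ?latt_fpos ?et_neq ?inE ?eqxx ?orbT.
Qed.

Variable S : {fset pt}.
Hypothesis S_del : {subset S <= latt ends (predC1 f)}.

Lemma notin_S (x : pt) : x (inr f) != 0 -> x \notin S.
Proof. by apply: contra => /S_del /latt_del_f ->. Qed.

Lemma etilde_notin_S : et \notin S.
Proof. by rewrite notin_S // etilde_f oppr_eq0 oner_eq0. Qed.

Lemma fpos_notin_S (y : pt) : y \in fpos -> y \notin S.
Proof. by move=> yf; rewrite notin_S // fpos_f // oner_eq0. Qed.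

Lemma rcellU_etilde_tilt (c : pt) (c0 : R) :
  (forall x, latt ends (predC1 f) x ->
     0 <= gap psi c c0 x /\ (gap psi c c0 x == 0) = (x \in S)) ->
  (forall y, y \in fpos -> 0 < gap psi c c0 y + gap psi c c0 et) ->
  rcell (latt ends predT) psi (et |` S)%fset.
Proof.
move=> del_ok fpos_gt0.
apply: (rcell_tilt (c := c) (c0 := c0) (t := - gap psi c c0 et)).
- by move=> x /fset1UP [-> | /S_del /latt_predT //]; apply: latt_etilde.
- by move=> x xD; rewrite in_fset1U (negbTE (latt_del_neq_etilde xD)); apply: del_ok.
- by rewrite addrN.
- by rewrite addrN eqxx fset1U1.
move=> y yf; rewrite opprK in_fset1U (negbTE (fpos_neq_etilde yf)) (negbTE (fpos_notin_S yf)).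
by rewrite ltW ?gt_eqF ?fpos_gt0.
Qed.

Lemma rcell_del_rcellU_etilde :
  rcell (latt ends (predC1 f)) psi S -> rcell (latt ends predT) psi (et |` S)%fset.
Proof.
move=> /rcellP [_ [c [c0 Hc]]]; apply: (rcellU_etilde_tilt Hc) => y yf.
have [p [q [pD qD etyq psi_lt]]] := etilde_add_fpos yf.
have [[p_ge0 _] [q_ge0 _]] := (Hc p pD, Hc q qD).
have := gap_add psi c c0 etyq; lra.
Qed.

Lemma rcellU_etilde_rcell_del :
  rcell (latt ends predT) psi (et |` S)%fset -> rcell (latt ends (predC1 f)) psi S.
Proof.
move=> /rcellP [_ [c [c0 Hc]]]; apply/rcellP; split=> //; exists c, c0 => x xD.
by have := Hc x (latt_predT xD); rewrite in_fset1U (negbTE (latt_del_neq_etilde xD)).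
Qed.

Lemma rcellU_fpos_rcellU_etilde (y : pt) : y \in fpos ->
  rcell (latt ends predT) psi (y |` S)%fset -> rcell (latt ends predT) psi (et |` S)%fset.
Proof.
move=> yf /rcellP [_ [c [c0 Hc]]]; apply: (rcellU_etilde_tilt (c := c) (c0 := c0)).
- move=> x xD; have := Hc x (latt_predT xD).
  have xy : x != y by apply: contraNneq (latt_del_notin_fpos xD) => ->.
  by rewrite in_fset1U (negbTE xy).
have [et_ge0 et_eq0] := Hc et latt_etilde.
have et_gt0 : 0 < gap psi c c0 et.
  rewrite lt_def et_ge0 andbT et_eq0 in_fset1U eq_sym (negbTE (fpos_neq_etilde yf)).
  exact: etilde_notin_S.
by move=> z zf; have [z_ge0 _] := Hc z (latt_fpos zf); apply: ltr_wpDl.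
Qed.

Lemma rcellU_etilde_rcellU_fpos :
  rcell (latt ends predT) psi (et |` S)%fset ->
  exists2 y, y \in fpos & rcell (latt ends predT) psi (y |` S)%fset.
Proof.
move=> /rcellP [_ [c [c0 Hc]]].
have [y yf ymin] := seq_argmin (gap psi c c0) (isT : fpos != [::]).
set t := gap psi c c0 y in ymin.
have fpos_gt0 z : z \in fpos -> 0 < gap psi c c0 z.
  move=> zf; have [z_ge0 z_eq0] := Hc z (latt_fpos zf).
  by rewrite lt_def z_ge0 andbT z_eq0 in_fset1U (negbTE (fpos_neq_etilde zf)) fpos_notin_S.
pose T := (S `|` [fset z | z in fpos & gap psi c c0 z == t])%fset.
have inT z : (z \in T) = (z \in S) || (z \in fpos) && (gap psi c c0 z == t).
  by rewrite in_fsetU in_fset inE.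
have et0 : gap psi c c0 et = 0 by apply/eqP; rewrite (Hc et latt_etilde).2 fset1U1.
have t_gt0 : 0 < t := fpos_gt0 y yf.
have cellT : rcell (latt ends predT) psi T.
  apply: (rcell_tilt (c := c) (c0 := c0) (t := t)).
  - move=> z; rewrite inT => /orP [/S_del /latt_predT // | /andP [zf _]]; exact: latt_fpos.
  - move=> x xD; rewrite inT (negbTE (latt_del_notin_fpos xD)) orbF.
    by have := Hc x (latt_predT xD); rewrite in_fset1U (negbTE (latt_del_neq_etilde xD)).
  - by rewrite et0 add0r ltW.
  - by rewrite et0 add0r gt_eqF // inT (negbTE etilde_notin_S) (negbTE etilde_notin_fpos).
  - by move=> z zf; rewrite subr_ge0 subr_eq0 ymin // inT (negbTE (fpos_notin_S zf)) zf.
exists y => //; case: psi_good => indep _ _ _.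
apply: (rcell_fsubset (@latt_seqP _) indep cellT).
by apply/fsubsetP => z /fset1UP [-> | zS]; rewrite inT ?zS // yf eqxx orbT.
Qed.

End GoodHeight.

End Deletion.

Theorem mainTheorem1 (R : realFieldType) (V E : finType) (ends : E -> V * V)
    (f : E) (psi : point R V E -> R) :
  @good_height R V E ends psi ->
  forall S : {fset point R V E},
    {subset S <= @latt R V E ends (predC1 f)} ->
    (@rcell R V E (@latt R V E ends (predC1 f)) psi S <->
       @rcell R V E (@latt R V E ends predT) psi (@etilde R V E ends f |` S)%fset) /\
    (@rcell R V E (@latt R V E ends predT) psi (@etilde R V E ends f |` S)%fset <->
       [\/ @rcell R V E (@latt R V E ends predT) psi (@eE R V E f |` S)%fset,
           @rcell R V E (@latt R V E ends predT) psi (@eright R V E ends f |` S)%fset |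
           @rcell R V E (@latt R V E ends predT) psi (@eleft R V E ends f |` S)%fset]).
Proof.
move=> psi_good S S_del; split; split.
- exact: (rcell_del_rcellU_etilde psi_good S_del).
- exact: rcellU_etilde_rcell_del.
- case/(rcellU_etilde_rcellU_fpos psi_good S_del) => y.
  by rewrite !inE => /or3P [] /eqP -> cell; [constructor 1 | constructor 3 | constructor 2].
- by case=> cell; apply: (rcellU_fpos_rcellU_etilde S_del _ cell); rewrite !inE eqxx ?orbT.
Qed.
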